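(* Let $K\ge1$, $n\ge0$ be integers and $\varepsilon\in(0,1)$. Consider standard percolation on $\mathbb{Z}_K$ in which each horizontal and each vertical edge is open independently with probability $1-\varepsilon$, and let $D^K(n,0)$ be the graph distance from $(0,0)$ to $(n,0)$ using open edges of $\mathbb{Z}_K$. Let $A=A(K,n,\varepsilon)$ be the event that in each unit square of $[\![0,n]\!]\times[\![-K,K]\!]$ (i.e. with vertices $(i,j),(i+1,j),(i,j+1),(i+1,j+1)$) at most one of its four edges is closed. Then \[ \mathbf{E}\big(D^K(n,0)\,\big|\,A\big)\le \mathbf{E}\big(D^{K,d}(n,0)\big)+3K. \]
   Context: $\mathbb{Z}_K=\mathbb{Z}\times[\![-K,K]\!]$ with vertical edges $(i,j)\to(i,j+1)$ and horizontal edges $(i,j)\to(i+1,j)$, each of length $1$. $D^{K,d}(n,0)$ refers to the Cross Model with the same $K,\varepsilon$: $\mathbb{Z}_K$ with additionally diagonal edges $(i,j)\to(i+1,j\pm1)$ of length $2$, where all vertical and diagonal edges are open and each horizontal edge is open with probability $1-\varepsilon$ independently (vertical and horizontal edges of length $1$); $D^{K,d}(n,0)$ is the length of a shortest open path in this model from $(0,0)$ to $(n,0)$. *)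

From HB Require Import structures.
From mathcomp Require Import all_boot all_order all_algebra.
From mathcomp Require Import all_classical all_reals all_analysis.
Set Implicit Arguments. Unset Strict Implicit. Unset Printing Implicit Defensive.
Import Order.TTheory GRing.Theory Num.Theory.
Local Open Scope classical_set_scope.
Local Open Scope ring_scope.

(* Vertices of Z x Z (Z_K is the part with rows in [-K,K]). *)
Definition vtx := (int * int)%type.

(* An edge of the square lattice: (true, i, j) is the horizontal edge
   (i,j)-(i+1,j); (false, i, j) is the vertical edge (i,j)-(i,j+1). *)
Definition edge := (bool * int * int)%type.

Definition inrow (K : nat) (j : int) : bool := (- (K%:Z) <= j) && (j <= K%:Z).

Definition inZK (K : nat) (e : edge) : bool :=
  let: (h, i, j) := e in
  if h then inrow K j else inrow K j && inrow K (j + 1).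

Definition is_horizontal (e : edge) : bool := e.1.1.

Definition edge_of (u v : vtx) : option edge :=
  if (v.1 == u.1 + 1) && (v.2 == u.2) then Some (true, u.1, u.2)
  else if (u.1 == v.1 + 1) && (u.2 == v.2) then Some (true, v.1, v.2)
  else if (v.1 == u.1) && (v.2 == u.2 + 1) then Some (false, u.1, u.2)
  else if (u.1 == v.1) && (u.2 == v.2 + 1) then Some (false, v.1, v.2)
  else None.

(* Standard percolation on Z_K: a step along an open edge of Z_K (w e = true means open) *)
Definition std_step (K : nat) (w : edge -> bool) : rel vtx :=
  fun u v => if edge_of u v is Some e then inZK K e && w e else false.

Definition is_diag (u v : vtx) : bool :=
  (`|v.1 - u.1| == 1) && (`|v.2 - u.2| == 1).
Definition diag_step (K : nat) : rel vtx :=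
  fun u v => is_diag u v && inrow K u.2 && inrow K v.2.

(* Cross Model: horizontal edges open according to w, vertical and diagonal
   edges always open. *)
Definition cross_step (K : nat) (w : edge -> bool) : rel vtx :=
  fun u v =>
    (if edge_of u v is Some e then inZK K e && (if is_horizontal e then w e else true)
     else false) || diag_step K u v.

Definition cross_wt (u v : vtx) : nat := if is_diag u v then 2 else 1.
Definition unit_wt (u v : vtx) : nat := 1.

(* Weighted graph distance: infimum of the lengths of step-paths from a to b
   (+oo if there is none). A path is a :: p, its length the sum of the
   weights of its consecutive steps. *)
Definition wdist (R : realType) (step : rel vtx) (wt : vtx -> vtx -> nat)
    (a b : vtx) : \bar R :=
  ereal_inf [set ((sumn (pairmap wt a p))%:R)%:E
            | p in [set p : seq vtx | path step a p /\ last a p = b]].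

Definition DK (R : realType) (K n : nat) (w : edge -> bool) : \bar R :=
  wdist R (std_step K w) unit_wt (0, 0) (n%:Z, 0).

Definition DKd (R : realType) (K n : nat) (w : edge -> bool) : \bar R :=
  wdist R (cross_step K w) cross_wt (0, 0) (n%:Z, 0).

Definition goodA (K n : nat) (w : edge -> bool) : Prop :=
  forall (i : nat) (j : int), (i < n)%N -> - (K%:Z) <= j -> j < K%:Z ->
    ((~~ w (true, i%:Z, j)) + (~~ w (true, i%:Z, (j + 1)%R))
     + (~~ w (false, i%:Z, j)) + (~~ w (false, (i%:Z + 1)%R, j)) <= 1)%N.

(* The family X (X e x = true iff edge e is open) is, on the edges satisfying S,
   an independent family of Bernoulli(p) variables. *)
Definition iid_bernoulli d (T : measurableType d) (R : realType)
    (P : probability T R) (S : pred edge) (p : R) (X : edge -> T -> bool) : Prop :=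
  (forall e, measurable [set x | X e x]) /\
  forall (s : seq edge) (b : edge -> bool), uniq s -> all S s ->
    P [set x | forall e, e \in s -> X e x = b e]
    = (\prod_(e <- s) (if b e then p else 1 - p))%:E.

Definition cond_expect d (T : measurableType d) (R : realType)
    (P : probability T R) (f : T -> \bar R) (A : set T) : \bar R :=
  ((\int[P]_(x in A) f x) * ((fine (P A))^-1)%:E)%E.

From HB Require Import structures.
From mathcomp Require Import all_boot all_order all_algebra.
From mathcomp Require Import all_classical all_reals all_analysis.
From mathcomp Require Import measurable_realfun.
From mathcomp Require Import zify ring lra.
Import Order.TTheory GRing.Theory Num.Theory.
Local Open Scope classical_set_scope.
Local Open Scope ring_scope.
Set Implicit Arguments. Unset Strict Implicit. Unset Printing Implicit Defensive.

(* Both distances are compared with one explicit quantity, the column sweep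
   [sweep K w n 0]: a dynamic programme crossing the strip column by column,
   paying 1 for an open horizontal edge, 3 for a closed one and 2 for a
   diagonal step. It bounds D^{K,d}(n,0) from below, because
   (x, y) |-> sweep (clamp x) y grows by at most the length of any step of
   the Cross Model. On the event A every move of the sweep is realised by an
   open path of standard percolation inside a good unit square, so
   D^K(n,0) <= sweep + 2K, the 2K paying for the climb in column 0. Finally
   the sweep decreases and A increases with the set of open edges, so by
   Harris' inequality E(sweep | A) <= E(sweep). *)

(** * Finite product measures and Harris' inequality *)

Definition set_at (I : eqType) (w : I -> bool) (i : I) (b : bool) : I -> bool :=
  fun j => if j == i then b else w j.

Definition cfg_le (I : Type) (w w' : I -> bool) : Prop := forall i, w i ==> w' i.

Lemma cfg_le_set_at (I : eqType) (w w' : I -> bool) i b :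
  cfg_le w w' -> cfg_le (set_at w i b) (set_at w' i b).
Proof. by move=> ww' j; rewrite /set_at; case: ifP => // _; rewrite implybb. Qed.

Lemma cfg_le_set_at_bool (I : eqType) (w : I -> bool) i :
  cfg_le (set_at w i false) (set_at w i true).
Proof. by move=> j; rewrite /set_at; case: ifP => // _; rewrite implybb. Qed.

Section ProductExpectation.
Variables (I : eqType) (R : realType) (p : R).
Hypotheses (p_ge0 : 0 <= p) (p_le1 : p <= 1).

(* Expectation over the coordinates in [s], drawn independently true with
   probability [p]; the coordinates outside [s] are set to [true]. *)
Fixpoint pexpect (s : seq I) (f : (I -> bool) -> R) : R :=
  if s is i :: s' then
    p * pexpect s' (fun w => f (set_at w i true))
    + (1 - p) * pexpect s' (fun w => f (set_at w i false))
  else f (fun _ => true).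

Let q_ge0 : 0 <= 1 - p. Proof. by rewrite subr_ge0. Qed.

Lemma le_pexpect s f g : (forall w, f w <= g w) -> pexpect s f <= pexpect s g.
Proof.
elim: s f g => [|i s IH] f g fg /=; first exact: fg.
by apply: lerD; apply: ler_wpM2l => //; apply: IH.
Qed.

Lemma pexpect_ge0 s f : (forall w, 0 <= f w) -> 0 <= pexpect s f.
Proof.
elim: s f => [|i s IH] f f0 /=; first exact: f0.
by apply: addr_ge0; apply: mulr_ge0 => //; apply: IH.
Qed.

Lemma pexpectD s f g : pexpect s (fun w => f w + g w) = pexpect s f + pexpect s g.
Proof.
elim: s f g => [|i s IH] f g //=.
by rewrite (IH (fun w => f (set_at w i true))) (IH (fun w => f (set_at w i false))); ring.
Qed.

Lemma pexpectZ s k f : pexpect s (fun w => k * f w) = k * pexpect s f.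
Proof.
elim: s f => [|i s IH] f //=.
by rewrite (IH (fun w => f (set_at w i true))) (IH (fun w => f (set_at w i false))); ring.
Qed.

Lemma pexpect_ge_all_true s f : (forall w, 0 <= f w) ->
  p ^+ size s * f (fun _ => true) <= pexpect s f.
Proof.
elim: s f => [|i s IH] f f0 /=; first by rewrite expr0 mul1r.
have -> : f (fun _ => true) = f (set_at (fun _ => true) i true).
  by congr f; apply: funext => j; rewrite /set_at; case: ifP.
rewrite exprS -mulrA -[X in X <= _]addr0; apply: lerD.
  by apply: ler_wpM2l => //; apply: (IH (fun w => f (set_at w i true))).
by apply: mulr_ge0 => //; apply: pexpect_ge0.
Qed.

(* Harris' inequality, by induction on [s]: conditioning on one coordinate,
   the two conditional means of [f] and of [g] are ordered oppositely. *)
Lemma pexpect_harris s f g :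
  {homo f : w w' / cfg_le w w' >-> w <= w'} ->
  {homo g : w w' / cfg_le w w' >-> w >= w'} ->
  pexpect s (fun w => f w * g w) <= pexpect s f * pexpect s g.
Proof.
elim: s f g => [|i s IH] f g mf ag //=.
pose at_i b (h : (I -> bool) -> R) w := h (set_at w i b).
have mono b : {homo at_i b f : w w' / cfg_le w w' >-> w <= w'}.
  by move=> w w' ww'; apply/mf/cfg_le_set_at.
have anti b : {homo at_i b g : w w' / cfg_le w w' >-> w >= w'}.
  by move=> w w' ww'; apply/ag/cfg_le_set_at.
have Hf : pexpect s (at_i false f) <= pexpect s (at_i true f).
  by apply: le_pexpect => w; apply/mf/cfg_le_set_at_bool.
have Hg : pexpect s (at_i true g) <= pexpect s (at_i false g).
  by apply: le_pexpect => w; apply/ag/cfg_le_set_at_bool.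
apply: le_trans (_ : p * (pexpect s (at_i true f) * pexpect s (at_i true g))
   + (1 - p) * (pexpect s (at_i false f) * pexpect s (at_i false g)) <= _).
  apply: lerD; apply: ler_wpM2l => //.
  - exact: (IH _ _ (mono true) (anti true)).
  - exact: (IH _ _ (mono false) (anti false)).
have mix a1 a0 b1 b0 : a0 <= a1 -> b1 <= b0 ->
    p * (a1 * b1) + (1 - p) * (a0 * b0)
    <= (p * a1 + (1 - p) * a0) * (p * b1 + (1 - p) * b0).
  move=> ha hb; rewrite -subr_ge0.
  have -> : (p * a1 + (1 - p) * a0) * (p * b1 + (1 - p) * b0)
            - (p * (a1 * b1) + (1 - p) * (a0 * b0))
            = p * (1 - p) * ((a1 - a0) * (b0 - b1)) by ring.
  by rewrite !mulr_ge0 // subr_ge0.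
exact: mix.
Qed.

End ProductExpectation.

Definition depends_on (I : eqType) (A : Type) (s : seq I) (f : (I -> bool) -> A) :=
  forall w w', {in s, w =1 w'} -> f w = f w'.

Lemma depends_on_set_at (I : eqType) (A : Type) (s : seq I) i b (f : (I -> bool) -> A) :
  depends_on (i :: s) f -> depends_on s (fun w => f (set_at w i b)).
Proof.
move=> df w w' ww'; apply: df => j; rewrite /set_at; case: eqP => // ne.
by rewrite in_cons => /orP [/eqP //|]; exact: ww'.
Qed.

(* [ge0_le_integral] without its measurability hypotheses, which the
   distances are never shown to satisfy. *)
Lemma ge0_le_integral_nonmeas d (T : measurableType d) (R : realType)
  (mu : {measure set T -> \bar R}) (D : set T) (f1 f2 : T -> \bar R) :
  (forall x, D x -> 0 <= f1 x)%E -> (forall x, D x -> f1 x <= f2 x)%E ->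
  (\int[mu]_(x in D) f1 x <= \int[mu]_(x in D) f2 x)%E.
Proof.
move=> f10 f12.
have f20 x : D x -> (0 <= f2 x)%E by move=> Dx; exact: le_trans (f10 x Dx) (f12 x Dx).
rewrite (ge0_integralE _ f10) (ge0_integralE _ f20).
apply: ereal_sup_le => _ [h /= hf <-]; exists h => //= x.
apply: le_trans (hf x) _; rewrite /patch; case: ifP => // /set_mem; exact: f12.
Qed.

(** * Integrals against independent Bernoulli edges *)

Section BernoulliIntegral.
Context d (T : measurableType d) (R : realType) (P : probability T R).
Variables (X : edge -> T -> bool) (S : pred edge) (p : R).
Hypothesis HX : iid_bernoulli P S p X.

Definition cylinder (t : seq edge) (c : edge -> bool) : set T :=
  [set x | forall e, e \in t -> X e x = c e].

Lemma measurable_X e : measurable_fun setT (X e).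
Proof.
apply: (measurable_fun_bool true); rewrite setTI.
have -> : X e @^-1` [set true] = [set x | X e x] by apply/seteqP; split => x /=.
exact: HX.1.
Qed.

Lemma measurable_cylinder t c : measurable (cylinder t c).
Proof.
elim: t => [|e t IH].
  have -> : cylinder [::] c = setT by apply/seteqP; split => x //= _ e; rewrite in_nil.
  exact: measurableT.
have -> : cylinder (e :: t) c = (setT `&` X e @^-1` [set c e]) `&` cylinder t c.
  apply/seteqP; split => x /=.
    move=> H; split; first by split => //; apply: H; rewrite mem_head.
    by move=> e' He'; apply: H; rewrite in_cons He' orbT.
  by move=> [[_ H1] H2] e'; rewrite in_cons => /orP [/eqP ->|]; [exact: H1|exact: H2].
by apply: measurableI => //; apply: measurable_X.
Qed.

Lemma measurable_depends_on s f : depends_on s f ->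
  measurable_fun [set: T] ((fun x => (f (X^~ x))%:E) : T -> \bar R).
Proof.
elim: s f => [|e s IH] f df.
  have -> : (fun x => (f (X^~ x))%:E) = cst (f (fun _ => true))%:E.
    by apply: funext => x; rewrite (df _ (fun _ => true)).
  exact: measurable_cst.
have -> : (fun x => (f (X^~ x))%:E) = fun x =>
    if X e x then (f (set_at (X^~ x) e true))%:E else (f (set_at (X^~ x) e false))%:E.
  apply: funext => x; case E: (X e x); congr EFin; congr f; apply: funext => e';
  by rewrite /set_at; case: eqP => // ->.
have dset b : depends_on s (fun w => f (set_at w e b)) by apply: depends_on_set_at.
exact: (measurable_fun_ifT (measurable_X e) (IH _ (dset true)) (IH _ (dset false))).
Qed.

(* Generalised to integrals over a cylinder on edges disjoint from [s] so that
   the induction on [s] goes through. *)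
Lemma integral_cylinder s : uniq s -> all S s -> forall t c f,
  uniq t -> all S t -> all (fun e => e \notin s) t -> depends_on s f ->
  (\int[P]_(x in cylinder t c) (f (X^~ x))%:E
   = ((\prod_(e <- t) (if c e then p else 1 - p)) * pexpect p s f)%:E)%E.
Proof.
elim: s => [|e s IH] us aS t c f ut aSt dst df.
  transitivity (\int[P]_(x in cylinder t c) (cst (f (fun _ => true))%:E x))%E.
    by apply: eq_integral => x _; rewrite /= (df _ (fun _ => true)).
  rewrite integral_cst; last exact: measurable_cylinder.
  by rewrite mulrC EFinM; congr (_ * _)%E; exact: HX.2.
move: us aS => /= /andP [es us] /andP [Se aS].
have et : e \notin t.
  by apply/negP => /(allP dst); rewrite in_cons eqxx.
have split_e : cylinder t c
    = cylinder (e :: t) (set_at c e true) `|` cylinder (e :: t) (set_at c e false).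
  apply/seteqP; split => x /=.
    move=> H; case Xe: (X e x); [left|right] => e'; rewrite in_cons /set_at;
      by case: eqP => [-> //|_] /=; exact: H.
  have key b : cylinder (e :: t) (set_at c e b) x -> cylinder t c x.
    move=> H e' He'; rewrite (H e'); last by rewrite in_cons He' orbT.
    by rewrite /set_at; case: eqP => // Eq; move: et; rewrite -Eq He'.
  by case; apply: key.
have disj : [disjoint cylinder (e :: t) (set_at c e true)
                    & cylinder (e :: t) (set_at c e false)].
  apply/disj_set2P; apply/seteqP; split => x //= [H1 H2].
  by have := H1 e (mem_head _ _); rewrite (H2 e (mem_head _ _)) /set_at eqxx.
have piece b : (\int[P]_(x in cylinder (e :: t) (set_at c e b)) (f (X^~ x))%:E
    = (((if b then p else 1 - p) * \prod_(e' <- t) (if c e' then p else 1 - p))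
       * pexpect p s (fun w => f (set_at w e b)))%:E)%E.
  transitivity (\int[P]_(x in cylinder (e :: t) (set_at c e b))
                 (f (set_at (X^~ x) e b))%:E)%E.
    apply: eq_integral => x; rewrite inE => Hx; congr EFin; congr f.
    apply: funext => e'; rewrite /set_at; case: eqP => // ->.
    by rewrite (Hx e (mem_head _ _)) /set_at eqxx.
  rewrite (IH us aS (e :: t) (set_at c e b) (fun w => f (set_at w e b))) /=; first last.
  - exact: depends_on_set_at.
  - rewrite es /=; apply/allP => e' He'; move/allP: dst => /(_ e' He').
    by rewrite in_cons negb_or => /andP [].
  - by rewrite Se.
  - by rewrite et.
  congr EFin; congr (_ * _); rewrite big_cons /set_at eqxx; congr (_ * _).
  by apply: eq_big_seq => e' He'; case: eqP => // Eq; move: et; rewrite -Eq He'.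
rewrite split_e integral_setU //; first last.
- exact: measurable_funS (measurable_depends_on df).
- exact: measurable_cylinder.
- exact: measurable_cylinder.
by rewrite !piece -EFinD; congr EFin; ring.
Qed.

Lemma integral_pexpect s f : uniq s -> all S s -> depends_on s f ->
  (\int[P]_x (f (X^~ x))%:E = (pexpect p s f)%:E)%E.
Proof.
move=> us aS df; have := @integral_cylinder s us aS [::] (fun _ => true) f isT isT isT df.
rewrite big_nil mul1r => <-.
by congr integral; apply/seteqP; split => x //= _ e; rewrite in_nil.
Qed.

Section Event.
Variables (s : seq edge) (G : (edge -> bool) -> Prop).
Hypotheses (us : uniq s) (aS : all S s).
Hypothesis G_dep : forall w w', {in s, w =1 w'} -> G w -> G w'.

Let indicG (w : edge -> bool) : R := (asbool (G w))%:R.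

Let indicG_dep : depends_on s indicG.
Proof.
move=> w w' ww'; rewrite /indicG.
by rewrite (@asbool_equiv_eq (G w) (G w')) //; split; apply: G_dep => e /ww' ->.
Qed.

Lemma measurable_event : measurable [set x | G (X^~ x)].
Proof.
have := measurable_depends_on indicG_dep measurableT (emeasurable_set1 1%E).
rewrite setTI; congr measurable; apply/seteqP; split => x /=; rewrite /indicG.
  by case: asboolP => // _ [] /eqP; rewrite mulr0n eq_sym oner_eq0.
by case: asboolP.
Qed.

Lemma measure_event : P [set x | G (X^~ x)] = (pexpect p s indicG)%:E.
Proof.
rewrite -integral_pexpect //.
have := integral_indic P measurableT measurable_event; rewrite setIT => <-.
by apply: eq_integral => x _; rewrite indicE.
Qed.

Lemma cond_expect_le_harris (h : (edge -> bool) -> R) (f g : T -> \bar R) (c : R) :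
  0 < p -> p <= 1 -> (forall w w', cfg_le w w' -> G w -> G w') -> G (fun _ => true) ->
  {homo h : w w' / cfg_le w w' >-> w >= w'} -> depends_on s h ->
  (forall w, 0 <= h w) -> (forall x, 0 <= f x)%E ->
  (forall x, G (X^~ x) -> f x <= (h (X^~ x) + c)%:E)%E ->
  (forall x, (h (X^~ x))%:E <= g x)%E ->
  (cond_expect P f [set x | G (X^~ x)] <= \int[P]_x g x + c%:E)%E.
Proof.
move=> p_gt0 p_le1 G_mono G_true h_anti h_dep h_ge0 f_ge0 f_le h_le.
have p_ge0 := ltW p_gt0.
have indicG_mono : {homo indicG : w w' / cfg_le w w' >-> w <= w'}.
  move=> w w' ww'; rewrite /indicG ler_nat.
  by case: (asboolP (G w)) => // /(G_mono _ _ ww'); case: asboolP.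
have PA_gt0 : 0 < pexpect p s indicG.
  apply: lt_le_trans (pexpect_ge_all_true p_ge0 p_le1 s _); last first.
    by move=> w; rewrite /indicG ler0n.
  by rewrite /indicG asboolT // mulr1 exprn_gt0.
have int_A : (\int[P]_(x in [set x | G (X^~ x)]) f x
              <= (pexpect p s (fun w => indicG w * (h w + c)))%:E)%E.
  rewrite -integral_pexpect //; last first.
    by move=> w w' ww'; rewrite (indicG_dep ww') (h_dep w w' ww').
  rewrite integral_mkcond; apply: ge0_le_integral_nonmeas => x _.
    by rewrite /patch; case: ifP.
  rewrite /patch /indicG; case: asboolP => [Gx|nG]; last first.
    by rewrite mul0r; case: ifP => // /set_mem /nG.
  by rewrite mem_set // mul1r; exact: f_le.
have int_h : ((pexpect p s h)%:E <= \int[P]_x g x)%E.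
  rewrite -integral_pexpect //; apply: ge0_le_integral_nonmeas => x _ //.
  by rewrite lee_fin.
have harris := pexpect_harris p_ge0 p_le1 s indicG_mono h_anti.
rewrite /cond_expect measure_event /=.
apply: le_trans (lee_wpmul2r _ int_A) _; first by rewrite lee_fin invr_ge0 ltW.
apply: le_trans (_ : ((pexpect p s h + c)%:E <= _)%E); last by rewrite EFinD leeD2r.
rewrite -EFinM lee_fin ler_pdivrMr //.
have -> : pexpect p s (fun w => indicG w * (h w + c))
          = pexpect p s (fun w => indicG w * h w) + c * pexpect p s indicG.
  by rewrite -pexpectZ -pexpectD; congr pexpect; apply: funext => w; ring.
by rewrite mulrDl [c * _]mulrC lerD2r mulrC.
Qed.

End Event.

End BernoulliIntegral.

(** * The column sweep and the Cross Model *)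

Definition horiz_cost (w : edge -> bool) (i : nat) (y : int) : nat :=
  if w (true, i%:Z, y) then 1 else 3.

(* Cheapest cost of reaching height [y] in column [i] when the columns are
   crossed from left to right, starting anywhere in column 0 at cost |y|:
   a horizontal step costs 1 if open and 3 otherwise (a detour around a
   closed edge of a good square), a diagonal step costs 2. *)
Fixpoint sweep (K : nat) (w : edge -> bool) (i : nat) (y : int) : nat :=
  if i is i'.+1 then
    minn (sweep K w i' y + horiz_cost w i' y)
      (minn (if inrow K (y - 1) then sweep K w i' (y - 1) + 2 else sweep K w i' y + 3)
            (if inrow K (y + 1) then sweep K w i' (y + 1) + 2 else sweep K w i' y + 3))
  else `|y|%N.

Section Sweep.
Variables (K : nat) (w : edge -> bool).
Local Notation sweep := (sweep K w).

Lemma sweepS_le_horiz i y : (sweep i.+1 y <= sweep i y + horiz_cost w i y)%N.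
Proof. by rewrite /= geq_min leqnn. Qed.

Lemma sweepS_le_diag_up i y : inrow K (y - 1) -> (sweep i.+1 y <= sweep i (y - 1) + 2)%N.
Proof. by move=> h; rewrite /= h !geq_min leqnn orbT. Qed.

Lemma sweepS_le_diag_down i y : inrow K (y + 1) -> (sweep i.+1 y <= sweep i (y + 1) + 2)%N.
Proof. by move=> h; rewrite /= h !geq_min leqnn !orbT. Qed.

Lemma sweepS_cases i y :
  [\/ sweep i.+1 y = (sweep i y + horiz_cost w i y)%N,
      inrow K (y - 1) /\ sweep i.+1 y = (sweep i (y - 1) + 2)%N,
      inrow K (y + 1) /\ sweep i.+1 y = (sweep i (y + 1) + 2)%N |
      sweep i.+1 y = (sweep i y + 3)%N].
Proof.
rewrite /=; set B := (if inrow K (y - 1) then _ else _).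
set C := (if inrow K (y + 1) then _ else _).
have minn_eq (a b : nat) : minn a b = a \/ minn a b = b.
  by rewrite /minn; case: ifP; [left | right].
case: (minn_eq (sweep i y + horiz_cost w i y)%N (minn B C)) => ->; first by constructor 1.
case: (minn_eq B C) => ->; rewrite /B /C; case: ifP => h.
- by constructor 2.
- by constructor 4.
- by constructor 3.
- by constructor 4.
Qed.

Let lipschitz_at i := forall y, inrow K y -> inrow K (y + 1) ->
  (sweep i (y + 1) <= sweep i y + 1)%N /\ (sweep i y <= sweep i (y + 1) + 1)%N.

Let sweep_ltS_of_lipschitz i : lipschitz_at i ->
  forall y, inrow K y -> (sweep i y + 1 <= sweep i.+1 y)%N.
Proof.
move=> L y hy; rewrite /= !leq_min; apply/and3P; split.
- by rewrite leq_add2l /horiz_cost; case: (w _).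
- case: ifP => h; last by rewrite leq_add2l.
  by have := L (y - 1) h; rewrite subrK => /(_ hy) [a _]; lia.
- case: ifP => h; last by rewrite leq_add2l.
  by have := L y hy h => -[_ a]; lia.
Qed.

(* The 1-Lipschitz property in [y] and the strict growth in [i] are proved
   together, each column's growth resting on the previous column's Lipschitz
   bound. *)
Let sweep_lipschitz_at i : lipschitz_at i.
Proof.
elim: i => [|i IH] y hy hy1.
  by move: hy hy1; rewrite /= /inrow => /andP [h1 h2] /andP [h3 h4]; lia.
have G := sweep_ltS_of_lipschitz IH; split.
- by have := @sweepS_le_diag_up i (y + 1); rewrite addrK => /(_ hy); have := G y hy; lia.
- apply: leq_trans (sweepS_le_diag_down i hy1) _.
  by rewrite -[2%N]/(1 + 1)%N addnA leq_add2r; exact: G.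
Qed.

Lemma sweep_ltS i y : inrow K y -> (sweep i y < sweep i.+1 y)%N.
Proof. by rewrite -addn1; apply: sweep_ltS_of_lipschitz. Qed.

Lemma sweep_lipschitz i y y' : inrow K y -> inrow K y' -> (y' = y + 1 \/ y' = y - 1) ->
  (sweep i y' <= sweep i y + 1)%N.
Proof.
move=> hy hy' [E|E]; first by rewrite E in hy' *; have [] := sweep_lipschitz_at i hy hy'.
have hy1 : inrow K (y' + 1) by rewrite E subrK.
by have [_] := sweep_lipschitz_at i hy' hy1; rewrite E subrK.
Qed.

End Sweep.

Lemma edge_ofP (u v : vtx) e : edge_of u v = Some e ->
  [\/ v = (u.1 + 1, u.2) /\ e = (true, u.1, u.2),
      u = (v.1 + 1, v.2) /\ e = (true, v.1, v.2),
      v = (u.1, u.2 + 1) /\ e = (false, u.1, u.2) |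
      u = (v.1, v.2 + 1) /\ e = (false, v.1, v.2)].
Proof.
case: u v => x y [x' y']; rewrite /edge_of /=.
case: ifP => [/andP [/eqP -> /eqP ->] [<-]|_]; first by constructor 1.
case: ifP => [/andP [/eqP -> /eqP ->] [<-]|_]; first by constructor 2.
case: ifP => [/andP [/eqP -> /eqP ->] [<-]|_]; first by constructor 3.
by case: ifP => [/andP [/eqP -> /eqP ->] [<-]|_] //; constructor 4.
Qed.

Lemma cross_wt_edge (u v : vtx) e : edge_of u v = Some e -> cross_wt u v = 1%N.
Proof.
case/edge_ofP => -[-> _]; rewrite /cross_wt /is_diag /=;
  by rewrite ?addrK ?(addrC _ 1) ?addKr ?subrr ?normr0 ?andbF.
Qed.

Definition clamp (n : nat) (x : int) : nat :=
  if x is Posz m then minn m n else 0%N.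

Lemma clamp_cases n x : (x < 0 /\ clamp n x = 0%N) \/
  (0 <= x /\ x <= n%:Z /\ x = (clamp n x)%:Z) \/ (n%:Z < x /\ clamp n x = n).
Proof. case: x => [m|m] /=; last by left. rewrite /minn; case: ifP => h; lia. Qed.

Lemma clampS n x : clamp n (x + 1) = clamp n x \/
  clamp n (x + 1) = (clamp n x).+1 /\ x = (clamp n x)%:Z /\ (clamp n x < n)%N.
Proof. by have := clamp_cases n x; have := clamp_cases n (x + 1); lia. Qed.

Section CrossPotential.
Variables (K : nat) (w : edge -> bool) (n : nat).

(* A potential that a step of the Cross Model raises by at most its length:
   the clamp makes it constant in the column index outside [0, n]. *)
Definition cross_pot (v : vtx) : nat := sweep K w (clamp n v.1) v.2.

Lemma cross_pot_right x y : w (true, x, y) ->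
  (cross_pot ((x + 1)%R, y) <= cross_pot (x, y) + 1)%N.
Proof.
move=> hw; rewrite /cross_pot /=.
case: (clampS n x) => [->|[-> [Ex _]]]; first exact: leq_addr.
by apply: leq_trans (sweepS_le_horiz _ _ _ _) _; rewrite /horiz_cost -Ex hw.
Qed.

Lemma cross_pot_left x y : inrow K y -> (cross_pot (x, y) <= cross_pot ((x + 1)%R, y) + 1)%N.
Proof.
move=> hy; rewrite /cross_pot /=.
case: (clampS n x) => [->|[-> _]]; first exact: leq_addr.
by have := sweep_ltS w (clamp n x) hy; lia.
Qed.

Lemma cross_pot_vertical x y y' : inrow K y -> inrow K y' -> (y' = y + 1 \/ y' = y - 1) ->
  (cross_pot (x, y') <= cross_pot (x, y) + 1)%N.
Proof. exact: sweep_lipschitz. Qed.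

Section Diagonal.
Variables (x y y' : int).
Hypotheses (hy : inrow K y) (hy' : inrow K y') (hyy : y' = y + 1 \/ y' = y - 1).

Lemma cross_pot_diag_right : (cross_pot ((x + 1)%R, y') <= cross_pot (x, y) + 2)%N.
Proof.
have lip := cross_pot_vertical x hy hy' hyy; rewrite /cross_pot /= in lip *.
case: (clampS n x) => [->|[-> _]]; first by lia.
case: hyy => ->.
  by apply: leq_trans (@sweepS_le_diag_up K w _ _ _) _; rewrite addrK.
by apply: leq_trans (@sweepS_le_diag_down K w _ _ _) _; rewrite subrK.
Qed.

Lemma cross_pot_diag_left : (cross_pot (x, y') <= cross_pot ((x + 1)%R, y) + 2)%N.
Proof.
have lip := cross_pot_vertical x hy hy' hyy.
have := cross_pot_left x hy; lia.
Qed.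

End Diagonal.

Lemma cross_step_pot u v : cross_step K w u v ->
  [/\ inrow K u.2, inrow K v.2 & (cross_pot v <= cross_pot u + cross_wt u v)%N].
Proof.
case: u v => x y [x' y']; rewrite /cross_step; case/orP.
  case E: edge_of => [e|] //; rewrite (cross_wt_edge E).
  case/edge_ofP: E => /= [] [[-> ->] ->]; rewrite /inZK /=.
  - by case/andP=> hy hw; split => //; exact: cross_pot_right.
  - by case/andP=> hy _; split => //; exact: cross_pot_left.
  - case/andP=> /andP [hy hy1] _; split => //.
    by apply: cross_pot_vertical => //; left.
  - case/andP=> /andP [hy hy1] _; split => //.
    by apply: cross_pot_vertical => //; right; rewrite addrK.
rewrite /diag_step /cross_wt => /andP [/andP [dg hy] hy']; rewrite dg; split => //.
move: dg; rewrite /is_diag /= => /andP [/eqP dx /eqP dy].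
have hyy : y' = y + 1 \/ y' = y - 1 by lia.
have [->|->] : x' = x + 1 \/ x = x' + 1 by lia.
  exact: cross_pot_diag_right.
exact: cross_pot_diag_left.
Qed.

Lemma path_cross_pot p a : inrow K a.2 -> path (cross_step K w) a p ->
  (cross_pot (last a p) <= cross_pot a + sumn (pairmap cross_wt a p))%N.
Proof.
elim: p a => [|v p IH] a ha /=; first by rewrite addn0.
case/andP => /cross_step_pot [_ hv hs] /(IH v hv); lia.
Qed.

End CrossPotential.

(** * Detours in good squares of standard percolation *)

Lemma edge_of_right (x y : int) : edge_of (x, y) (x + 1, y) = Some (true, x, y).
Proof. by rewrite /edge_of /= !eqxx. Qed.

Lemma edge_of_left (x y : int) : edge_of (x + 1, y) (x, y) = Some (true, x, y).
Proof.
have h1 : (x == x + 1 + 1) = false by apply/eqP; lia.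
by rewrite /edge_of /= h1 /= !eqxx.
Qed.

Lemma edge_of_up (x y : int) : edge_of (x, y) (x, y + 1) = Some (false, x, y).
Proof.
have h1 : (x == x + 1) = false by apply/eqP; lia.
by rewrite /edge_of /= h1 /= !eqxx.
Qed.

Lemma edge_of_down (x y : int) : edge_of (x, y + 1) (x, y) = Some (false, x, y).
Proof.
have h1 : (x == x + 1) = false by apply/eqP; lia.
have h2 : (y == y + 1 + 1) = false by apply/eqP; lia.
by rewrite /edge_of /= h1 h2 /= !eqxx andbF.
Qed.

Section StandardPercolation.
Variables (K : nat) (w : edge -> bool).

Lemma std_step_right x y : std_step K w (x, y) (x + 1, y) = inrow K y && w (true, x, y).
Proof. by rewrite /std_step edge_of_right. Qed.

Lemma std_step_left x y : std_step K w (x + 1, y) (x, y) = inrow K y && w (true, x, y).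
Proof. by rewrite /std_step edge_of_left. Qed.

Lemma std_step_up x y :
  std_step K w (x, y) (x, y + 1) = [&& inrow K y, inrow K (y + 1) & w (false, x, y)].
Proof. by rewrite /std_step edge_of_up andbA. Qed.

Lemma std_step_down x y :
  std_step K w (x, y + 1) (x, y) = [&& inrow K y, inrow K (y + 1) & w (false, x, y)].
Proof. by rewrite /std_step edge_of_down andbA. Qed.

Definition std_reach (a b : vtx) (m : nat) : Prop := exists p,
  [/\ path (std_step K w) a p, last a p = b & (size p <= m)%N].

Lemma std_reach_trans a b c m1 m2 :
  std_reach a b m1 -> std_reach b c m2 -> std_reach a c (m1 + m2).
Proof.
move=> [p [h1 h2 h3]] [q [g1 g2 g3]]; exists (p ++ q).
by rewrite cat_path last_cat h1 h2 size_cat leq_add.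
Qed.

Lemma std_reach_le a b m m' : (m <= m')%N -> std_reach a b m -> std_reach a b m'.
Proof. by move=> h [p [h1 h2 h3]]; exists p; split => //; apply: leq_trans h. Qed.

Lemma std_reach_step a b m : (0 < m)%N -> std_step K w a b -> std_reach a b m.
Proof. by move=> m_gt0 h; exists [:: b]; rewrite /= h. Qed.

Lemma std_reach_path2 a b c m : (1 < m)%N ->
  std_step K w a b -> std_step K w b c -> std_reach a c m.
Proof. by move=> m_gt1 ab bc; exists [:: b; c]; rewrite /= ab bc. Qed.

Lemma std_reach_path3 a b c e :
  std_step K w a b -> std_step K w b c -> std_step K w c e -> std_reach a e 3.
Proof. by move=> ab bc ce; exists [:: b; c; e]; rewrite /= ab bc ce. Qed.

Variable n : nat.
Hypothesis good : goodA K n w.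

(* In a good square, whichever side is closed, its endpoints are joined by
   the three other sides and the diagonal endpoints by two sides. *)
Section GoodSquare.
Variables (i : nat) (j : int).
Hypotheses (i_lt_n : (i < n)%N) (j_ge : - (K%:Z) <= j) (j_lt : j < K%:Z).
Let x := i%:Z.

Let rj : inrow K j. Proof. by rewrite /inrow; apply/andP; split; lia. Qed.
Let rj1 : inrow K (j + 1). Proof. by rewrite /inrow; apply/andP; split; lia. Qed.

Let three_open_sides :
  [/\ ~~ w (true, x, j) -> [&& w (true, x, j + 1), w (false, x, j) & w (false, x + 1, j)],
      ~~ w (true, x, j + 1) -> [&& w (true, x, j), w (false, x, j) & w (false, x + 1, j)],
      ~~ w (false, x, j) -> [&& w (true, x, j), w (true, x, j + 1) & w (false, x + 1, j)] &
      ~~ w (false, x + 1, j) -> [&& w (true, x, j), w (true, x, j + 1) & w (false, x, j)]].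
Proof.
by move: (good i_lt_n j_ge j_lt); rewrite -/x;
  case: (w (true, x, j)); case: (w (true, x, j + 1));
  case: (w (false, x, j)); case: (w (false, x + 1, j)).
Qed.

Let open_around_up :
  (w (true, x, j) && w (false, x + 1, j)) || (w (false, x, j) && w (true, x, j + 1)).
Proof.
by move: (good i_lt_n j_ge j_lt); rewrite -/x;
  case: (w (true, x, j)); case: (w (true, x, j + 1));
  case: (w (false, x, j)); case: (w (false, x + 1, j)).
Qed.

Let open_around_down :
  (w (true, x, j + 1) && w (false, x + 1, j)) || (w (false, x, j) && w (true, x, j)).
Proof.
by move: (good i_lt_n j_ge j_lt); rewrite -/x;
  case: (w (true, x, j)); case: (w (true, x, j + 1));
  case: (w (false, x, j)); case: (w (false, x + 1, j)).
Qed.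

Ltac std_steps := rewrite ?std_step_right ?std_step_left ?std_step_up ?std_step_down ?rj ?rj1.

Lemma square_left_up : std_reach (x, j) (x, j + 1) 3.
Proof.
case hc: (w (false, x, j)); first by apply: std_reach_step; std_steps.
have [_ _ /(_ (negbT hc)) /and3P [ha hb hd] _] := three_open_sides.
by apply: (@std_reach_path3 _ (x + 1, j) (x + 1, j + 1)); std_steps.
Qed.

Lemma square_left_down : std_reach (x, j + 1) (x, j) 3.
Proof.
case hc: (w (false, x, j)); first by apply: std_reach_step; std_steps.
have [_ _ /(_ (negbT hc)) /and3P [ha hb hd] _] := three_open_sides.
by apply: (@std_reach_path3 _ (x + 1, j + 1) (x + 1, j)); std_steps.
Qed.

Lemma square_bottom : std_reach (x, j) (x + 1, j) 3.
Proof.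
case ha: (w (true, x, j)); first by apply: std_reach_step; std_steps.
have [/(_ (negbT ha)) /and3P [hb hc hd] _ _ _] := three_open_sides.
by apply: (@std_reach_path3 _ (x, j + 1) (x + 1, j + 1)); std_steps.
Qed.

Lemma square_top : std_reach (x, j + 1) (x + 1, j + 1) 3.
Proof.
case hb: (w (true, x, j + 1)); first by apply: std_reach_step; std_steps.
have [_ /(_ (negbT hb)) /and3P [ha hc hd] _ _] := three_open_sides.
by apply: (@std_reach_path3 _ (x, j) (x + 1, j)); std_steps.
Qed.

Lemma square_diag_up : std_reach (x, j) (x + 1, j + 1) 2.
Proof.
case/orP: open_around_up => /andP [h1 h2].
  by apply: (@std_reach_path2 _ (x + 1, j)); std_steps.
by apply: (@std_reach_path2 _ (x, j + 1)); std_steps.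
Qed.

Lemma square_diag_down : std_reach (x, j + 1) (x + 1, j) 2.
Proof.
case/orP: open_around_down => /andP [h1 h2].
  by apply: (@std_reach_path2 _ (x + 1, j + 1)); std_steps.
by apply: (@std_reach_path2 _ (x, j)); std_steps.
Qed.

End GoodSquare.
End StandardPercolation.

Section SweepReach.
Variables (K : nat) (w : edge -> bool) (n : nat).
Hypotheses (K_gt0 : (0 < K)%N) (good : goodA K n w) (n_gt0 : (0 < n)%N).

Lemma std_reach_column0 m : (m <= K)%N ->
  std_reach K w (0, 0) (0, m%:Z) (3 * m) /\ std_reach K w (0, 0) (0, - m%:Z) (3 * m).
Proof.
elim: m => [|m IH] hm; first by split; exists [::]; rewrite //= oppr0.
have [up down] := IH (ltnW hm); rewrite mulnS addnC; split.
  have := std_reach_trans up (square_left_up good n_gt0 (j := m%:Z) _ _).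
  have -> : m%:Z + 1 = (m.+1)%:Z by lia.
  by apply; lia.
have := square_left_down good n_gt0 (j := - (m.+1)%:Z).
have -> : - (m.+1)%:Z + 1 = - m%:Z by lia.
by move=> sq; apply: std_reach_trans down (sq _ _); lia.
Qed.

Lemma std_reach_right c y : (c < n)%N -> inrow K y ->
  std_reach K w (c%:Z, y) (c%:Z + 1, y) 3.
Proof.
move=> c_lt /andP [y_ge y_le]; have [y_lt|y_eq] := ltP y K%:Z.
  exact: (square_bottom good c_lt y_ge y_lt).
by have := square_top good c_lt (j := y - 1); rewrite subrK; apply; lia.
Qed.

(* Column 0 is climbed at cost 3|y| <= |y| + 2K: this is the additive 2K. *)
Lemma std_reach_sweep c : (c <= n)%N -> forall y, inrow K y ->
  std_reach K w (0, 0) (c%:Z, y) (sweep K w c y + 2 * K).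
Proof.
elim: c => [|c IH] c_le y hy.
  case/andP: hy; case: y => [m|m] y_ge y_le /=.
    have m_le : (m <= K)%N by lia.
    by have [up _] := std_reach_column0 m_le; apply: std_reach_le up; lia.
  have m_lt : (m.+1 <= K)%N by lia.
  by have [_ down] := std_reach_column0 m_lt; rewrite NegzE; apply: std_reach_le down; lia.
have {}IH := IH (ltnW c_le); have -> : (c.+1)%:Z = c%:Z + 1 by lia.
have [hy1 hy2] : - (K%:Z) <= y /\ y <= K%:Z by apply/andP.
case: (sweepS_cases K w c y) => [->|[hy' ->]|[hy' ->]|->].
- have step : std_reach K w (c%:Z, y) (c%:Z + 1, y) (horiz_cost w c y).
    rewrite /horiz_cost; case hw: (w _); last exact: std_reach_right.
    by apply: std_reach_step; rewrite // std_step_right hy hw.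
  by apply: std_reach_le (std_reach_trans (IH y hy) step); rewrite addnAC.
- have /andP [y1_ge _] := hy'; have y1_lt : y - 1 < K%:Z by lia.
  have := square_diag_up good c_le y1_ge y1_lt; rewrite subrK => sq.
  by apply: std_reach_le (std_reach_trans (IH _ hy') sq); lia.
- have /andP [_ y1_le] := hy'; have y_lt : y < K%:Z by lia.
  have sq := square_diag_down good c_le hy1 y_lt.
  by apply: std_reach_le (std_reach_trans (IH _ hy') sq); lia.
- apply: std_reach_le (std_reach_trans (IH y hy) (std_reach_right c_le hy)).
  by rewrite addnAC.
Qed.

End SweepReach.

Lemma inrow0 K : inrow K 0.
Proof. by rewrite /inrow; apply/andP; split; lia. Qed.

Section Distances.
Variables (R : realType) (K n : nat) (w : edge -> bool).

Lemma DK_ge0 : (0 <= DK R K n w)%E.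
Proof. by apply: le_ereal_inf_tmp => _ [p _ <-]; rewrite lee_fin ler0n. Qed.

Lemma DK_le_sweep : (0 < K)%N -> goodA K n w ->
  (DK R K n w <= ((sweep K w n 0 + 2 * K)%:R)%:E)%E.
Proof.
move=> K_gt0 good; apply: ge_ereal_inf.
have [p [pth lst sz]] : std_reach K w (0, 0) (n%:Z, 0) (sweep K w n 0 + 2 * K).
  case: n good => [|n'] good; first by exists [::].
  exact: std_reach_sweep K_gt0 good isT n'.+1 (leqnn _) 0 (inrow0 K).
have sumn_unit (a : vtx) q : sumn (pairmap unit_wt a q) = size q.
  by elim: q a => [|v q IH] a //=; rewrite IH add1n.
exists ((sumn (pairmap unit_wt (0, 0) p))%:R)%:E; first by exists p.
by rewrite sumn_unit lee_fin ler_nat.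
Qed.

Lemma sweep_le_DKd : (((sweep K w n 0)%:R)%:E <= DKd R K n w)%E.
Proof.
apply: le_ereal_inf_tmp => _ [p [pth lst] <-]; rewrite lee_fin ler_nat.
have := @path_cross_pot K w n p (0, 0) (inrow0 K) pth.
by rewrite lst /cross_pot /= minnn min0n.
Qed.

End Distances.

Lemma sweep_anti K c y : {homo (fun w => sweep K w c y) : w w' / cfg_le w w' >-> (w >= w')%N}.
Proof.
move=> w w' ww'; elim: c y => [|c IH] y //=.
have minn_le2 (a b a' b' : nat) : (a <= a')%N -> (b <= b')%N -> (minn a b <= minn a' b')%N.
  by move=> *; lia.
apply: (minn_le2).
  rewrite leq_add // /horiz_cost.
  by move: (ww' (true, c%:Z, y)); case: (w _); case: (w' _).
by apply: (minn_le2); case: inrow; rewrite leq_add.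
Qed.

Lemma goodA_mono K n : forall w w', cfg_le w w' -> goodA K n w -> goodA K n w'.
Proof.
move=> w w' ww' good i j i_lt j_ge j_lt; apply: leq_trans (good i j i_lt j_ge j_lt).
have closed_le e : (~~ w' e <= ~~ w e)%N by move: (ww' e); case: (w e); case: (w' e).
by rewrite !leq_add.
Qed.

Lemma goodA_all_true K n : goodA K n (fun _ => true).
Proof. by []. Qed.

Definition rows (K : nat) : seq int := [seq k%:Z - K%:Z | k <- iota 0 (K + K).+1].

Definition box (K n : nat) : seq edge :=
  undup [seq e <- [seq (bi.1, bi.2, j) | bi <- [seq (b, i%:Z) | b <- [:: true; false],
                                                               i <- iota 0 n.+1],
                                        j <- rows K]
        | inZK K e].

Lemma box_uniq K n : uniq (box K n).
Proof. exact: undup_uniq. Qed.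

Lemma box_inZK K n : all (inZK K) (box K n).
Proof. by apply/allP => e; rewrite mem_undup mem_filter => /andP []. Qed.

Lemma mem_box K n b (i : nat) j : (i <= n)%N -> inrow K j -> inZK K (b, i%:Z, j) ->
  (b, i%:Z, j) \in box K n.
Proof.
move=> i_le /andP [j_ge j_le] e_in; rewrite mem_undup mem_filter e_in.
apply/allpairsPdep; exists (b, i%:Z), j; split => //.
  by apply/allpairsPdep; exists b, i; split => //; [case: b {e_in} | rewrite mem_iota; lia].
by apply/mapP; exists (absz (j + K%:Z)); [rewrite mem_iota; lia | lia].
Qed.

Section BoxDependence.
Variables (K n : nat) (w w' : edge -> bool).
Hypothesis ww' : {in box K n, w =1 w'}.

Lemma sweep_depends c : (c <= n)%N -> forall y, inrow K y -> sweep K w c y = sweep K w' c y.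
Proof.
elim: c => [|c IH] // c_lt y hy /=.
have IH' y' : inrow K y' -> sweep K w c y' = sweep K w' c y' by apply/IH/ltnW.
rewrite /horiz_cost ww' ?mem_box // ?(ltnW c_lt) // IH' //.
by case h1: (inrow K (y - 1)); case h2: (inrow K (y + 1)); rewrite ?IH'.
Qed.

Lemma goodA_depends : goodA K n w -> goodA K n w'.
Proof.
move=> good i j i_lt j_ge j_lt.
have rj : inrow K j by rewrite /inrow; apply/andP; split; lia.
have rj1 : inrow K (j + 1) by rewrite /inrow; apply/andP; split; lia.
have E : i%:Z + 1 = (i.+1)%:Z by lia.
rewrite E -!ww' ?mem_box //= ?rj ?rj1 ?(ltnW i_lt) // -E.
exact: good.
Qed.

End BoxDependence.

Theorem proposition7 (d : measure_display) (T : measurableType d) (R : realType)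
    (P : probability T R) (X : edge -> T -> bool) (K n : nat) (eps : R) :
  (1 <= K)%N -> 0 < eps -> eps < 1 ->
  iid_bernoulli P (inZK K) (1 - eps) X ->
  (cond_expect P (fun x => DK R K n (X^~ x)) [set x | goodA K n (X^~ x)]
   <= \int[P]_x DKd R K n (X^~ x) + ((3 * K)%:R)%:E)%E.
Proof.
move=> K_gt0 eps_gt0 eps_lt1 HX.
pose h w : R := (sweep K w n 0)%:R.
have h_anti : {homo h : w w' / cfg_le w w' >-> w >= w'}.
  by move=> w w' ww'; rewrite ler_nat; exact: sweep_anti.
have h_dep : depends_on (box K n) h.
  by move=> w w' ww'; rewrite /h (sweep_depends ww' (leqnn n) (inrow0 K)).
have p_gt0 : 0 < 1 - eps by rewrite subr_gt0.
have p_le1 : 1 - eps <= 1 by rewrite lerBlDr lerDl ltW.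
have good_dep w w' : {in box K n, w =1 w'} -> goodA K n w -> goodA K n w'.
  exact: goodA_depends.
have DK_le x : goodA K n (X^~ x) -> (DK R K n (X^~ x) <= (h (X^~ x) + (2 * K)%:R)%:E)%E.
  by move/(DK_le_sweep R K_gt0); rewrite natrD.
have bound := cond_expect_le_harris HX (box_uniq K n) (box_inZK K n) good_dep
  p_gt0 p_le1 (@goodA_mono K n) (@goodA_all_true K n) h_anti h_dep (fun w => ler0n _ _)
  (fun x => DK_ge0 R K n (X^~ x)) DK_le (fun x => sweep_le_DKd R K n (X^~ x)).
apply: le_trans bound _.
by apply: leeD2l; rewrite lee_fin ler_nat leq_mul2r ltnW ?orbT.
Qed.
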